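(* Let $\mathbb{T}$ be the $3$-regular tree ($q=2$), let $T_2$ be the star consisting of a vertex $v_0$ and its three neighbours, and let $H\subset T_2$ be a path $a - v_0 - b$ with $a,b$ two of the neighbours of $v_0$. Let $\mu_H$ be the probability measure on $\{0,1\}^{\{a,v_0,b\}}$ giving probability $1/4$ to each of the configurations $(\eta_a,\eta_{v_0},\eta_b)\in\{(0,1,1),(0,0,1),(1,1,0),(1,0,0)\}$. Then $\mu_H$ is locally invariant (LI), but there is no LI probability measure on $\{0,1\}^{T_2}$ whose marginal on $\{0,1\}^{H}$ is $\mu_H$; hence there is no automorphism-invariant probability measure on $\{0,1\}^{\mathbb{T}}$ with marginal $\mu_H$.
   Context: A probability measure $\mu_H$ on $\Omega^{V(H)}$, $H$ a subgraph of $\mathbb{T}$, is locally invariant (LI) if whenever $H_1,H_2$ are connected subgraphs of $H$ and $\phi:H_1\to H_2$ is a graph isomorphism, the marginals of $\mu_H$ on $H_1$ and $H_2$ correspond under $\phi$. *)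

From HB Require Import structures.
From mathcomp Require Import all_boot all_order all_algebra.
Set Implicit Arguments. Unset Strict Implicit. Unset Printing Implicit Defensive.
Import Order.TTheory GRing.Theory Num.Theory.
Local Open Scope ring_scope.

(* Spin space Omega = {0,1}, encoded as bool (false = 0, true = 1). *)
Definition config (V : finType) := {ffun V -> bool}.

Definition prob_measure (R : numDomainType) (V : finType) (mu : config V -> R) : Prop :=
  (forall eta, 0 <= mu eta) /\ \sum_(eta : config V) mu eta = 1.

Definition marg (R : numDomainType) (V : finType) (mu : config V -> R)
  (W : {set V}) (xi : V -> bool) : R :=
  \sum_(eta : config V | [forall v in W, eta v == xi v]) mu eta.

(* W induces a connected subgraph of the graph (V, e).  In a graph that is a
   subgraph of a tree, connected subgraphs are exactly induced subgraphs on
   connected vertex sets. *)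
Definition connected_set (V : finType) (e : rel V) (W : {set V}) : Prop :=
  forall x y, x \in W -> y \in W ->
    connect [rel u v | [&& u \in W, v \in W & e u v]] x y.

Definition iso_on (V : finType) (e : rel V) (W1 W2 : {set V}) (phi : V -> V) : Prop :=
  {in W1 &, injective phi} /\ phi @: W1 = W2 /\
  {in W1 &, forall x y, e (phi x) (phi y) = e x y}.

Definition LI (R : numDomainType) (V : finType) (e : rel V) (mu : config V -> R) : Prop :=
  forall (W1 W2 : {set V}) (phi : V -> V),
    connected_set e W1 -> connected_set e W2 -> iso_on e W1 W2 phi ->
    forall xi : V -> bool, marg mu W2 xi = marg mu W1 (xi \o phi).

(* Star on 'I_n with centre 0: edges {0,i}, i <> 0.
   For n = 4 this is T_2 (0 = v0, 1 = a, 2 = b, 3 = the third neighbour);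
   for n = 3 it is the path H : a(1) - v0(0) - b(2). *)
Definition star_e (n : nat) : rel 'I_n :=
  fun x y => (val x == 0%N) (+) (val y == 0%N).

Definition muH3 (R : numFieldType) (xa xv xb : bool) : R :=
  if (xa, xv, xb) \in [:: (false, true, true); (false, false, true);
                          (true, true, false); (true, false, false)]
  then 1 / 4%:R else 0.

Definition vH0 : 'I_3 := @Ordinal 3 0 isT.
Definition vHa : 'I_3 := @Ordinal 3 1 isT.
Definition vHb : 'I_3 := @Ordinal 3 2 isT.

Definition muH (R : numFieldType) (eta : config 'I_3) : R :=
  muH3 R (eta vHa) (eta vH0) (eta vHb).

Definition embH (i : 'I_3) : 'I_4 := widen_ord (leqnSn 3) i.

(* Vertices: reduced words over 3 letters (no two consecutive letters equal);
   the empty word is the root.  x :: w is adjacent to w. *)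
Definition reduced (s : seq 'I_3) : bool := sorted (fun a b => a != b) s.
Definition TV := {s : seq 'I_3 | reduced s}.

Definition tchild (u v : TV) : bool :=
  (size (val v) == (size (val u)).+1) && (behead (val v) == val u).
Definition tadj (u v : TV) : bool := tchild u v || tchild v u.

Definition tree_aut (phi : TV -> TV) : Prop :=
  bijective phi /\ forall u v, tadj (phi u) (phi v) = tadj u v.

Definition troot : TV := exist _ [::] isT.
Definition ta : TV := exist _ [:: (@Ordinal 3 0 isT)] isT.
Definition tb : TV := exist _ [:: (@Ordinal 3 1 isT)] isT.

(* A probability measure on {0,1}^T (product sigma-algebra) is encoded by its
   values on cylinder events: nu s = P(eta_v = x for all (v,x) in s).
   By Kolmogorov/Caratheodory (compactness of {0,1}^T) such consistent,
   nonnegative, normalized, additive cylinder functions correspond exactly to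
   probability measures, and the measure is Aut-invariant iff its cylinder
   function is. *)
Definition cyl_prob (R : numDomainType) (nu : seq (TV * bool) -> R) : Prop :=
  [/\ nu [::] = 1,
      (forall s, 0 <= nu s),
      (forall s t, s =i t -> nu s = nu t) &
      (forall v s, nu s = nu ((v, false) :: s) + nu ((v, true) :: s))].

Definition aut_invariant (R : numDomainType) (nu : seq (TV * bool) -> R) : Prop :=
  forall phi, tree_aut phi ->
    forall s, nu [seq (phi p.1, p.2) | p <- s] = nu s.

(* Under mu_H the end spins eta_a and eta_b always differ, while eta_a and
   eta_v0 are independent fair coins; hence the marginal on any set missing a or
   b is uniform.  This gives local invariance, because an isomorphism between
   connected subsets of the path a - v0 - b either maps a proper subset onto one
   of the same size, or is an automorphism of the path, fixing v0 and fixing or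
   swapping the ends.  In an LI extension to the star (or an
   automorphism-invariant extension to the tree), the path a - v0 - b is carried
   onto p - v0 - q for any two leaves p, q, so any two of the three leaves
   almost surely carry different spins: impossible with two spin values. *)

From HB Require Import structures.
From mathcomp Require Import all_boot all_order all_algebra all_fingroup.
From mathcomp Require Import lra.
Import Order.TTheory GRing.Theory Num.Theory.
Local Open Scope ring_scope.

Lemma muH3E (R : numFieldType) xa xv xb :
  muH3 R xa xv xb = if xa != xb then 1 / 4%:R else 0.
Proof. by case: xa; case: xv; case: xb. Qed.

Section Marginals.

Context {R : numDomainType} {V : finType} (mu : config V -> R).

Lemma marg_setT (xi : V -> bool) : marg mu setT xi = mu [ffun v => xi v].
Proof.
rewrite /marg (big_pred1 [ffun v => xi v]) // => eta /=.
apply/forallP/eqP => [eq_xi | -> v]; last by rewrite ffunE eqxx implybT.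
by apply/ffunP => v; rewrite ffunE; move/implyP/(_ (in_setT v))/eqP: (eq_xi v).
Qed.

Lemma marg_imsetT (U : finType) (f : U -> V) (xi : V -> bool) :
  marg mu (f @: setT) xi =
  \sum_(eta : config V | [forall i, eta (f i) == xi (f i)]) mu eta.
Proof.
apply: eq_bigl => eta; apply/forallP/forallP => [eq_xi i | eq_xi v].
  by apply: (implyP (eq_xi (f i))); rewrite imset_f.
by apply/implyP => /imsetP [i _ ->].
Qed.

Lemma le_marg (W : {set V}) (eta : config V) :
  (forall eta', 0 <= mu eta') -> mu eta <= marg mu W eta.
Proof.
move=> mu_ge0; rewrite /marg (bigD1 eta) /=; last by apply/forallP => v; apply/implyP.
by rewrite lerDl sumr_ge0.
Qed.

End Marginals.

Lemma bool_pigeonhole (x y z : bool) : [|| x == y, x == z | y == z].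
Proof. by case: x; case: y; case: z. Qed.

Definition config3 (xv xa xb : bool) : config 'I_3 :=
  [ffun i : 'I_3 => if val i == 0%N then xv else if val i == 1%N then xa else xb].

Lemma ord3P (P : 'I_3 -> Prop) : P vH0 -> P vHa -> P vHb -> forall i, P i.
Proof.
move=> P0 Pa Pb [[|[|[|m]]] lt_m3] //.
- by rewrite (_ : Ordinal _ = vH0) //; apply: val_inj.
- by rewrite (_ : Ordinal _ = vHa) //; apply: val_inj.
- by rewrite (_ : Ordinal _ = vHb) //; apply: val_inj.
Qed.

Lemma big_config3 (R : nmodType) (F : config 'I_3 -> R) :
  \sum_eta F eta = \sum_(xv : bool) \sum_(xa : bool) \sum_(xb : bool) F (config3 xv xa xb).
Proof.
rewrite (reindex (fun p : bool * (bool * bool) => config3 p.1 p.2.1 p.2.2)) /=.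
  by under [RHS]eq_bigr do rewrite pair_big; rewrite pair_big.
apply: onW_bij; exists (fun eta : config 'I_3 => (eta vH0, (eta vHa, eta vHb))).
  by case=> xv [xa xb]; rewrite !ffunE.
by move=> eta; apply/ffunP; apply: ord3P; rewrite ffunE.
Qed.

Lemma forall_ord3 (P : 'I_3 -> bool) : [forall i, P i] = [&& P vH0, P vHa & P vHb].
Proof.
apply/forallP/and3P => [P_all | [P0 Pa Pb]]; first by split; apply: P_all.
exact: ord3P.
Qed.

Lemma card_set_ord3 (W : {set 'I_3}) :
  #|W| = ((vH0 \in W) + (vHa \in W) + (vHb \in W))%N.
Proof.
rewrite -sum1_card big_mkcond /= !big_ord_recl big_ord0 addn0 addnA.
by congr (_ + _ + _); congr (if _ \in W then _ else _); apply: val_inj.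
Qed.

Lemma connected_star3_abE (W : {set 'I_3}) : connected_set (@star_e 3) W ->
  (vHa \in W) && (vHb \in W) = (W == setT).
Proof.
move=> W_conn; apply/andP/eqP => [[Wa Wb] | ->]; last by rewrite !in_setT.
have W0 : vH0 \in W.
  case/connectP: (W_conn _ _ Wa Wb) => [[|z p]] /=; first by move=> _ /(congr1 val).
  case/andP=> /and3P [_ Wz e_az] _ _.
  by rewrite (_ : vH0 = z) //; apply: val_inj; move: e_az; rewrite /star_e /= => /eqP.
by apply/setP; apply: ord3P; rewrite in_setT.
Qed.

Lemma marg_muH_indep (R : realFieldType) (W : {set 'I_3}) (xi : 'I_3 -> bool) :
  ~~ ((vHa \in W) && (vHb \in W)) -> marg (muH R) W xi = 2 ^- #|W|.
Proof.
rewrite /marg big_mkcond /= big_config3 !big_bool /= card_set_ord3 !forall_ord3.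
rewrite /muH !ffunE /= !muH3E.
case: (vH0 \in W); case: (vHa \in W); case: (vHb \in W) => //= _;
case: (xi vH0); case: (xi vHa); case: (xi vHb) => /=; lra.
Qed.

Lemma star3_aut_ab (phi : 'I_3 -> 'I_3) : iso_on (@star_e 3) setT setT phi ->
  (phi vHa == vHa) && (phi vHb == vHb) || (phi vHa == vHb) && (phi vHb == vHa).
Proof.
move=> [phi_inj [_ phi_e]].
have neq_phi x y : val x != val y -> phi x != phi y.
  by apply: contra => /eqP/phi_inj; rewrite !in_setT => /(_ isT isT) ->.
move: (neq_phi vH0 vHa isT) (neq_phi vH0 vHb isT) (neq_phi vHa vHb isT).
move: (phi_e vH0 vHa (in_setT _) (in_setT _)) (phi_e vH0 vHb (in_setT _) (in_setT _)).
rewrite /star_e /=.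
by case: (phi vH0) => [[|[|[|?]]] ?]; case: (phi vHa) => [[|[|[|?]]] ?];
  case: (phi vHb) => [[|[|[|?]]] ?].
Qed.

Lemma muH_prob (R : realFieldType) : prob_measure (muH R).
Proof.
split; first by move=> eta; rewrite /muH muH3E; case: ifP => _; lra.
by rewrite big_config3 !big_bool /muH !ffunE /= !muH3E /=; lra.
Qed.

Lemma muH_LI (R : realFieldType) : LI (@star_e 3) (muH R).
Proof.
move=> W1 W2 phi W1_conn W2_conn [phi_inj [phi_W1 phi_e]] xi.
have card_W2 : #|W2| = #|W1| by rewrite -phi_W1 card_in_imset.
have setT_card (W : {set 'I_3}) : (W == setT) = (3 <= #|W|)%N.
  by rewrite eqEcard subsetT cardsT card_ord.
have [W1T | W1_neqT] := eqVneq W1 setT.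
  have W2T : W2 = setT by apply/eqP; rewrite setT_card card_W2 W1T cardsT card_ord.
  rewrite W1T W2T in phi_inj phi_W1 phi_e.
  rewrite W1T W2T !marg_setT /muH !ffunE !muH3E /=.
  have [|] := orP (@star3_aut_ab phi (conj phi_inj (conj phi_W1 phi_e)));
    by case/andP => /eqP-> /eqP->; rewrite // eq_sym.
have W2_neqT : W2 != setT by rewrite setT_card card_W2 -setT_card.
by rewrite !marg_muH_indep ?connected_star3_abE ?card_W2.
Qed.

Lemma connected_star_center (n : nat) (W : {set 'I_n}) (c : 'I_n) :
  val c = 0%N -> c \in W -> connected_set (@star_e n) W.
Proof.
move=> c0 Wc.
have to_c x : x \in W -> connect [rel u v | [&& u \in W, v \in W & star_e u v]] x c.
  move=> Wx; have [-> | x_neq_c] := eqVneq x c; first exact: connect0.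
  apply: connect1; rewrite /= Wx Wc /star_e c0 eqxx addbT.
  by apply: contra x_neq_c => /eqP x0; apply/eqP/val_inj; rewrite x0 c0.
have sym_e : connect_sym [rel u v | [&& u \in W, v \in W & star_e u v]].
  by apply: sym_connect_sym => u v /=; rewrite /star_e andbCA addbC.
by move=> x y Wx Wy; apply: connect_trans (to_c x Wx) _; rewrite sym_e to_c.
Qed.

Definition star4_relabel (p q i : 'I_4) : 'I_4 :=
  if val i == 1%N then p else if val i == 2%N then q else i.

Lemma star4_relabel_iso (p q : 'I_4) :
  val p != 0%N -> val q != 0%N -> p != q ->
  iso_on (@star_e 4) (embH @: setT) (star4_relabel p q @: (embH @: setT))
    (star4_relabel p q).
Proof.
move=> p_leaf q_leaf p_neq_q.
have relabel0 x : (val (star4_relabel p q x) == 0%N) = (val x == 0%N).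
  rewrite /star4_relabel; case: ifP => [/eqP-> | _]; first exact: negbTE.
  by case: ifP => [/eqP-> | _] //; exact: negbTE.
split; last by split=> // x y _ _; rewrite /star_e !relabel0.
move=> _ _ /imsetP [i _ ->] /imsetP [j _ ->]; rewrite /star4_relabel.
elim/ord3P: i; elim/ord3P: j => //= eq_pq;
  by [ move: p_neq_q; rewrite eq_pq eqxx
     | move: p_leaf; rewrite eq_pq | move: p_leaf; rewrite -eq_pq
     | move: q_leaf; rewrite eq_pq | move: q_leaf; rewrite -eq_pq ].
Qed.

Section ExtensionToStar.

Context {R : realFieldType} {mu : config 'I_4 -> R}.
Hypotheses (mu_prob : prob_measure mu) (mu_LI : LI (@star_e 4) mu).
Hypothesis mu_extends : forall xi : config 'I_3,
  muH R xi = \sum_(eta : config 'I_4 | [forall i : 'I_3, eta (embH i) == xi i]) mu eta.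

Lemma LI_extension_leaves_differ (eta : config 'I_4) (p q : 'I_4) :
  val p != 0%N -> val q != 0%N -> p != q -> eta p = eta q -> mu eta = 0.
Proof.
move=> p_leaf q_leaf p_neq_q eta_pq; have [mu_ge0 _] := mu_prob.
set phi := star4_relabel p q; set H := embH @: setT.
have H_center : embH vH0 \in H by rewrite imset_f.
have marg_H : marg mu H (eta \o phi) = 0.
  rewrite marg_imsetT.
  transitivity (muH R [ffun i => eta (phi (embH i))]).
    by rewrite mu_extends; apply: eq_bigl => eta'; apply: eq_forallb => i; rewrite ffunE.
  by rewrite /muH !ffunE muH3E /phi /star4_relabel /= eta_pq eqxx.
have H_conn := connected_star_center _ _ (embH vH0) erefl H_center.
have phiH_conn :=
  connected_star_center _ _ (phi (embH vH0)) erefl (imset_f phi H_center).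
have phi_iso := star4_relabel_iso _ _ p_leaf q_leaf p_neq_q.
apply/eqP; rewrite eq_le mu_ge0 andbT -marg_H.
by rewrite -(mu_LI _ _ _ H_conn phiH_conn phi_iso eta) le_marg.
Qed.

Lemma LI_extension_absurd : False.
Proof.
have mu0 eta : mu eta = 0.
  have := bool_pigeonhole (eta (@Ordinal 4 1 isT)) (eta (@Ordinal 4 2 isT))
                          (eta (@Ordinal 4 3 isT)).
  by case/or3P => /eqP; apply: LI_extension_leaves_differ.
by have [_] := mu_prob; rewrite big1 // => /eqP; rewrite eq_sym oner_eq0.
Qed.

End ExtensionToStar.

Section CylinderFunctions.

Context {R : numDomainType} {nu : seq (TV * bool) -> R}.
Hypothesis nu_prob : cyl_prob nu.

Lemma cyl_le_subset (s t : seq (TV * bool)) : {subset t <= s} -> nu s <= nu t.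
Proof.
have [_ nu_ge0 nu_perm nu_split] := nu_prob.
move=> sub_ts; rewrite (nu_perm s (s ++ t)).
  elim: s {sub_ts} => [|[v x] s IHs] //=; apply: le_trans IHs.
  by rewrite (nu_split v (s ++ t)); case: x; rewrite ?lerDl ?lerDr.
move=> z; rewrite mem_cat; case: (boolP (z \in s)) => //= s'z.
by apply/esym/negbTE; apply: contra s'z; apply: sub_ts.
Qed.

Lemma cyl_eq0_subset (s t : seq (TV * bool)) :
  nu t = 0 -> {subset t <= s} -> nu s = 0.
Proof.
have [_ nu_ge0 _ _] := nu_prob.
move=> nu_t0 /cyl_le_subset; rewrite nu_t0 => nu_s_le0.
by apply/eqP; rewrite eq_le nu_s_le0 nu_ge0.
Qed.

Lemma cyl_eq0_pinned (vs : seq TV) (t : seq (TV * bool)) :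
  (forall xs : seq bool, size xs = size vs -> nu (zip vs xs ++ t) = 0) -> nu t = 0.
Proof.
have [_ _ nu_perm nu_split] := nu_prob.
elim: vs t => [|v vs IHvs] t pinned0; first exact: (pinned0 [::]).
rewrite (nu_split v) !IHvs ?addr0 // => xs size_xs;
  rewrite (nu_perm _ _ (perm_mem (permEl (perm_catCA _ [:: (v, _)] t))));
  by apply: (pinned0 (_ :: xs)); rewrite /= size_xs.
Qed.

End CylinderFunctions.

Lemma reduced_map (p : {perm 'I_3}) (s : seq 'I_3) : reduced s -> reduced (map p s).
Proof.
by rewrite /reduced sorted_map; apply: sub_sorted => x y /=; rewrite (inj_eq perm_inj).
Qed.

Definition tmap (p : {perm 'I_3}) (u : TV) : TV :=
  exist _ (map p (val u)) (reduced_map p (val u) (valP u)).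

Lemma tmap_can (p q : {perm 'I_3}) : cancel p q -> cancel (tmap p) (tmap q).
Proof. by move=> pK u; apply: val_inj; rewrite /= -map_comp (eq_map pK) map_id. Qed.

Lemma tmap_aut (p : {perm 'I_3}) : tree_aut (tmap p).
Proof.
split; first by exists (tmap p^-1); apply: tmap_can; [exact: permK | exact: permKV].
have tchild_tmap u v : tchild (tmap p u) (tmap p v) = tchild u v.
  by rewrite /tchild /= !size_map behead_map (inj_eq (inj_map perm_inj)).
by move=> u v; rewrite /tadj !tchild_tmap.
Qed.

Definition tleaf (i : 'I_3) : TV := exist _ [:: i] isT.

Lemma tmap_leaf (p : {perm 'I_3}) (i : 'I_3) : tmap p (tleaf i) = tleaf (p i).
Proof. exact: val_inj. Qed.

Section InvariantExtension.

Context {R : realFieldType} {nu : seq (TV * bool) -> R}.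
Hypotheses (nu_prob : cyl_prob nu) (nu_inv : aut_invariant nu).
Hypothesis nu_extends : forall xa xv xb : bool,
  nu [:: (ta, xa); (troot, xv); (tb, xb)] = muH3 R xa xv xb.

Lemma aut_invariant_extension_ab_differ (x : bool) : nu [:: (ta, x); (tb, x)] = 0.
Proof.
have [_ _ nu_perm nu_split] := nu_prob.
have pinned_root v : nu [:: (troot, v); (ta, x); (tb, x)] = 0.
  rewrite (nu_perm _ [:: (ta, x); (troot, v); (tb, x)]) ?nu_extends ?muH3E ?eqxx //.
  by move=> w; rewrite !inE orbCA.
by rewrite (nu_split troot) !pinned_root addr0.
Qed.

Lemma aut_invariant_extension_leaves_differ (p : {perm 'I_3}) (x : bool) :
  nu [:: (tmap p ta, x); (tmap p tb, x)] = 0.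
Proof.
rewrite -(aut_invariant_extension_ab_differ x).
exact: (nu_inv _ (tmap_aut p) [:: (ta, x); (tb, x)]).
Qed.

Lemma aut_invariant_extension_absurd : False.
Proof.
have [nu_root _ _ _] := nu_prob.
set a : 'I_3 := Ordinal (isT : 0 < 3)%N; set b : 'I_3 := Ordinal (isT : 1 < 3)%N.
set c : 'I_3 := Ordinal (isT : 2 < 3)%N.
suff : nu [::] = 0 by rewrite nu_root => /eqP; rewrite oner_eq0.
apply: (cyl_eq0_pinned nu_prob [:: ta; tb; tleaf c]) => -[|x [|y [|z []]]] // _.
rewrite cats0 /=.
case/or3P: (bool_pigeonhole x y z) => /eqP eq_xyz.
- apply: (cyl_eq0_subset nu_prob _ _ (aut_invariant_extension_ab_differ x)).
  by move=> w; rewrite !inE eq_xyz => /orP [] ->; rewrite ?orbT.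
- apply: (cyl_eq0_subset nu_prob _ _
           (aut_invariant_extension_leaves_differ (tperm b c) x)).
  rewrite !tmap_leaf tpermD ?tpermL //.
  by move=> w; rewrite !inE eq_xyz => /orP [] ->; rewrite ?orbT.
- apply: (cyl_eq0_subset nu_prob _ _
           (aut_invariant_extension_leaves_differ (tperm a c) y)).
  rewrite !tmap_leaf tpermL ?tpermD //.
  by move=> w; rewrite !inE eq_xyz => /orP [] ->; rewrite ?orbT.
Qed.

End InvariantExtension.

Theorem mainTheorem12 (R : realFieldType) :
  [/\ prob_measure (muH R) /\ LI (@star_e 3) (muH R),
      ~ (exists mu : config 'I_4 -> R,
           [/\ prob_measure mu, LI (@star_e 4) mu &
               forall xi : config 'I_3,
                 muH R xi = \sum_(eta : config 'I_4 |
                                   [forall i : 'I_3, eta (embH i) == xi i]) mu eta])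
    & ~ (exists nu : seq (TV * bool) -> R,
           [/\ cyl_prob nu, aut_invariant nu &
               forall xa xv xb : bool,
                 nu [:: (ta, xa); (troot, xv); (tb, xb)] = muH3 R xa xv xb])].
Proof.
split; first by split; [exact: muH_prob | exact: muH_LI].
- by case=> mu []; exact: LI_extension_absurd.
- by case=> nu []; exact: aut_invariant_extension_absurd.
Qed.
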